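(* Let $F,G_1,\dots,G_n$ be pairwise disjoint always solvable graphs, let $u\in V(F)$ and $v_i\in V(G_i)$ for $1\le i\le n$, and let $H$ be the graph obtained from the disjoint union $F\cup G_1\cup\cdots\cup G_n$ by adding the edges $v_iu$ for $1\le i\le n$. If $\mathcal{A}_F(u)=0$, then $H$ is always solvable. If $\mathcal{A}_F(u)=1$, then $H$ is always solvable if and only if the number of indices $i$ with $\mathcal{A}_{G_i}(v_i)=1$ is even.
   Context: For a finite simple graph $G$ with vertex set $\{v_1,\dots,v_n\}$, the closed adjacency matrix $N(G)$ is the $n\times n$ matrix over $\mathbb{Z}_2$ whose $(i,j)$ entry is $1$ iff $i=j$ or $v_i$ is adjacent to $v_j$. $G$ is always solvable if $\operatorname{Ker}(N(G))=0$. Elements of $\operatorname{Ker}(N(G))$ are null patterns. A vertex $v$ is half-activated if $\boldsymbol{\ell}(v)=1$ for some null pattern $\boldsymbol{\ell}$; otherwise it is always-activated if $\mathbf{p}(v)=1$ for every $\mathbf{p}$ with $N(G)\mathbf{p}=\mathbf{1}$ (the all-ones vector), and never-activated if $\mathbf{p}(v)=0$ for every such $\mathbf{p}$. The activation number $\mathcal{A}_G(v)$ is $1$, $0$, $-1$ for always-, never-, half-activated respectively. *)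

From HB Require Import structures.
From mathcomp Require Import all_boot all_algebra.
Set Implicit Arguments. Unset Strict Implicit. Unset Printing Implicit Defensive.
Import GRing.Theory.
Local Open Scope ring_scope.

(* A finite simple graph is given by a vertex finType T and an adjacency
   relation adj (assumed symmetric and irreflexive where needed). *)

Definition closedN (T : finType) (adj : rel T) (p : {ffun T -> 'F_2}) :
  {ffun T -> 'F_2} :=
  [ffun v => \sum_(w | (w == v) || adj v w) p w].

Definition null_pattern (T : finType) (adj : rel T) (l : {ffun T -> 'F_2}) : bool :=
  closedN adj l == 0.

Definition always_solvable (T : finType) (adj : rel T) : Prop :=
  forall l : {ffun T -> 'F_2}, null_pattern adj l -> l = 0.

Definition half_activated (T : finType) (adj : rel T) (v : T) : bool :=
  [exists l : {ffun T -> 'F_2}, null_pattern adj l && (l v == 1)].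

Definition solution (T : finType) (adj : rel T) (p : {ffun T -> 'F_2}) : bool :=
  closedN adj p == [ffun=> 1].

Definition always_activated (T : finType) (adj : rel T) (v : T) : bool :=
  ~~ half_activated adj v &&
  [forall p : {ffun T -> 'F_2}, solution adj p ==> (p v == 1)].

Definition never_activated (T : finType) (adj : rel T) (v : T) : bool :=
  ~~ half_activated adj v &&
  [forall p : {ffun T -> 'F_2}, solution adj p ==> (p v == 0)].

(* activation number: 1, 0, -1 for always-, never-, half-activated.
   (Since N(G)p = 1 always has a solution, exactly one case occurs; the
   final junk value 2 is never reached.) *)
Definition activation (T : finType) (adj : rel T) (v : T) : int :=
  if half_activated adj v then -1
  else if always_activated adj v then 1
  else if never_activated adj v then 0
  else 2.

Definition Hadj (VF : finType) (adjF : rel VF) (n : nat) (VG : 'I_n -> finType)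
  (adjG : forall i, rel (VG i)) (u : VF) (v : forall i, VG i) :
  rel (VF + {i : 'I_n & VG i})%type :=
  fun x y =>
    match x, y with
    | inl a, inl b => adjF a b
    | inr s, inr t => (tag s == tag t) && adjG (tag s) (tagged s) (tagged_as s t)
    | inl a, inr t => (a == u) && (tagged t == v (tag t))
    | inr s, inl b => (b == u) && (tagged s == v (tag s))
    end.

From mathcomp Require Import all_boot all_algebra.
Set Implicit Arguments. Unset Strict Implicit. Unset Printing Implicit Defensive.
Import GRing.Theory.
Local Open Scope ring_scope.

(* If N = N(G) is invertible over Z_2, let p solve N p = 1 and q_v solve
   N q_v = e_v.  As N is symmetric and x^T N x = sum_w x_w in characteristic 2,
   q_v(v) = q_v^T N q_v = q_v^T N p = p(v), which is 1 exactly when v is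
   always-activated.  A null pattern l of H restricts on G_i to l(u) q_(v_i),
   so N(F) l_F = l(u) c e_u, where c is the parity of the number of
   always-activated v_i; hence l_F = l(u) c q_u and l(u) = l(u) c p_F(u).
   So H has a nonzero null pattern iff c = p_F(u) = 1, and then one is glued
   from q_u and the q_(v_i). *)

Lemma F2_pchar : 2%N \in [pchar 'F_2].
Proof. exact: pchar_Fp. Qed.

Lemma F2_addrr (a : 'F_2) : a + a = 0.
Proof. exact: (addrr_pchar2 F2_pchar). Qed.

Lemma F2_cases (a : 'F_2) : a = 0 \/ a = 1.
Proof. by case: a => [[|[|m]] lt_m2]; [left | right | ] => //; exact/val_inj. Qed.

Lemma F2_add_eq0 (a b : 'F_2) : a + b = 0 -> a = b.
Proof. by move/eqP; rewrite addr_eq0 (oppr_pchar2 F2_pchar) => /eqP. Qed.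

Lemma F2_sum_card (I : finType) (a : I -> 'F_2) :
  \sum_i a i = (odd #|[set i | a i == 1]|)%:R.
Proof.
rewrite (bigID (fun i => a i == 1)) /= [X in _ + X]big1 => [|i]; last first.
  by case: (F2_cases (a i)) => ->; rewrite ?eqxx.
rewrite addr0 (eq_bigr (fun=> 1)) => [|i /eqP //].
rewrite (eq_bigl (mem [set i | a i == 1])); last by move=> i /=; rewrite inE.
by rewrite sumr_const -modn2 Fp_nat_mod.
Qed.

Lemma sum_sym_pchar2 (R : nzRingType) (T : finType) (f : T -> T -> R) :
  2%N \in [pchar R] -> (forall v w, f v w = f w v) -> (forall v, f v v = 0) ->
  \sum_v \sum_w f v w = 0.
Proof.
move=> char2 f_sym f_diag.
pose below v w := if (enum_rank w < enum_rank v)%N then f v w else 0.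
have split_diag v w : f v w = below v w + below w v.
  rewrite /below; case: ltngtP => [_|_|/val_inj/enum_rank_inj ->].
  - by rewrite addr0.
  - by rewrite add0r f_sym.
  - by rewrite f_diag addr0.
have -> : \sum_v \sum_w f v w = \sum_v \sum_w below v w + \sum_v \sum_w below w v.
  rewrite -big_split; apply: eq_bigr => v _.
  by rewrite -big_split; apply: eq_bigr => w _.
by rewrite [X in _ + X]exchange_big (addrr_pchar2 char2).
Qed.

Section ClosedNeighbourhood.
Variables (T : finType) (adj : rel T).

Definition delta (v : T) : {ffun T -> 'F_2} := [ffun w => (w == v)%:R].

Definition dotv (x y : {ffun T -> 'F_2}) : 'F_2 := \sum_w x w * y w.

Lemma dotvC x y : dotv x y = dotv y x.
Proof. by apply: eq_bigr => w _; rewrite mulrC. Qed.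

Lemma dotv_delta x v : dotv x (delta v) = x v.
Proof.
rewrite /dotv (bigD1 v) //= big1 ?addr0 => [|w /negbTE w_v].
  by rewrite ffunE eqxx mulr1.
by rewrite ffunE w_v mulr0.
Qed.

Lemma dotv_ones x : dotv x [ffun=> 1] = \sum_w x w.
Proof. by apply: eq_bigr => w _; rewrite ffunE mulr1. Qed.

Lemma closedNB x y : closedN adj (x - y) = closedN adj x - closedN adj y.
Proof.
by apply/ffunP => v; rewrite !ffunE -sumrB; apply: eq_bigr => w _; rewrite !ffunE.
Qed.

Hypotheses (adj_sym : symmetric adj) (adj_irr : irreflexive adj).

Lemma dotv_closedN x y : dotv (closedN adj x) y = dotv x (closedN adj y).
Proof.
rewrite /dotv.
under eq_bigr => v _ do rewrite ffunE big_distrl /= big_mkcond /=.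
rewrite exchange_big /=; apply: eq_bigr => w _.
rewrite ffunE big_distrr /= [RHS]big_mkcond /=; apply: eq_bigr => v _.
by rewrite (adj_sym v w) (eq_sym w v).
Qed.

(* The edge terms x_v x_w come in symmetric pairs, which cancel. *)
Lemma dotv_closedN_diag x : dotv x (closedN adj x) = \sum_w x w.
Proof.
have -> : dotv x (closedN adj x) =
    \sum_v x v + \sum_v \sum_w (if adj v w then x v * x w else 0).
  rewrite -big_split /=; apply: eq_bigr => v _.
  rewrite ffunE (bigD1 v) ?eqxx //= mulrDr big_distrr /=; congr (_ + _).
    by case: (F2_cases (x v)) => ->; rewrite ?mul0r ?mul1r.
  rewrite big_mkcond /=; apply: eq_bigr => w _.
  by case: (eqVneq w v) => [->|_]; rewrite ?adj_irr /= ?andbT.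
rewrite (sum_sym_pchar2 F2_pchar) ?addr0 // => [v w | v].
  by rewrite adj_sym mulrC.
by rewrite adj_irr.
Qed.

Lemma preimage_delta_solution_eq q p v :
  closedN adj q = delta v -> solution adj p -> q v = p v.
Proof.
move=> Nq /eqP Np.
by rewrite -dotv_delta -Nq dotv_closedN_diag -dotv_ones -Np -dotv_closedN Nq
  dotvC dotv_delta.
Qed.

End ClosedNeighbourhood.

Section AlwaysSolvable.
Variables (T : finType) (adj : rel T).
Hypothesis adj_solv : always_solvable adj.

Lemma closedN_inj : injective (closedN adj).
Proof.
move=> x y Nxy; apply/eqP; rewrite -subr_eq0; apply/eqP/adj_solv.
by rewrite /null_pattern closedNB Nxy subrr.
Qed.

Definition closedN_inv : {ffun T -> 'F_2} -> {ffun T -> 'F_2} := invF closedN_inj.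

Lemma closedN_invK y : closedN adj (closedN_inv y) = y.
Proof. exact: f_invF. Qed.

Lemma solution_closedN_inv : solution adj (closedN_inv [ffun=> 1]).
Proof. exact/eqP/closedN_invK. Qed.

Lemma solutionE p : solution adj p -> p = closedN_inv [ffun=> 1].
Proof. by move=> /eqP Np; apply: closedN_inj; rewrite closedN_invK. Qed.

Lemma half_activated_solvable v : half_activated adj v = false.
Proof. by apply/negbTE/existsP => -[l /andP[/adj_solv -> ]]; rewrite ffunE. Qed.

Lemma activation_solvable v :
  activation adj v = if closedN_inv [ffun=> 1] v == 1 then 1 else 0.
Proof.
rewrite /activation /always_activated /never_activated half_activated_solvable /=.
set p := closedN_inv _.
have all_sol (P : pred 'F_2) :
    [forall p', solution adj p' ==> P (p' v)] = P (p v).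
  apply/forallP/idP => [/(_ p)|Pp p']; first by rewrite solution_closedN_inv.
  by apply/implyP => /solutionE ->.
rewrite (all_sol (pred1 1)) (all_sol (pred1 0)) /=.
case: ifP => // p_v; rewrite ifT //.
by case: (F2_cases (p v)) p_v => ->; rewrite ?eqxx.
Qed.

End AlwaysSolvable.

Unset Implicit Arguments.

Section HubGraph.
Variables (VF : finType) (adjF : rel VF) (n : nat)
  (VG : 'I_n -> finType) (adjG : forall i, rel (VG i))
  (u : VF) (v : forall i, VG i).

Local Notation VH := (VF + {i : 'I_n & VG i})%type.
Local Notation adjH := (Hadj adjF adjG u v).
Definition tagG {i} (x : VG i) : {i : 'I_n & VG i} := Tagged (fun i => VG i) x.
Local Notation inG x := (inr (tagG x)).

Definition restrF (l : {ffun VH -> 'F_2}) : {ffun VF -> 'F_2} :=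
  [ffun w => l (inl w)].
Definition restrG (l : {ffun VH -> 'F_2}) i : {ffun VG i -> 'F_2} :=
  [ffun x => l (inG x)].

Lemma restr_eq0 l : restrF l = 0 -> (forall i, restrG l i = 0) -> l = 0.
Proof.
move=> /ffunP lF0 lG0; apply/ffunP => -[w|[i x]].
  by have := lF0 w; rewrite !ffunE.
by have /ffunP/(_ x) := lG0 i; rewrite !ffunE.
Qed.

Lemma sum_sigma (P : pred {i : 'I_n & VG i}) (f : {i : 'I_n & VG i} -> 'F_2) :
  \sum_(t | P t) f t = \sum_i \sum_(x : VG i | P (tagG x)) f (tagG x).
Proof.
rewrite (@sig_big_dep _ _ _ _ VG predT (fun i x => P (tagG x))
  (fun i x => f (tagG x))).
by apply: eq_big => -[].
Qed.

Lemma closedN_Hadj_inl l w : closedN adjH l (inl w) =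
  closedN adjF (restrF l) w + (if w == u then \sum_i restrG l i (v i) else 0).
Proof.
rewrite !ffunE big_sumType /=; congr (_ + _).
  by apply: eq_bigr => b _; rewrite ffunE.
case: eqVneq => _; last by rewrite big_pred0.
rewrite sum_sigma; apply: eq_bigr => i _.
by rewrite (big_pred1 (v i)) ?ffunE.
Qed.

Lemma closedN_Hadj_inr l i (x : VG i) : closedN adjH l (inG x) =
  closedN (adjG i) (restrG l i) x + (if x == v i then l (inl u) else 0).
Proof.
rewrite !ffunE big_sumType /= addrC; congr (_ + _); last first.
  case: eqVneq => [_|x_v]; last by rewrite big_pred0 // => b; rewrite andbF.
  by rewrite (big_pred1 u) // => b; rewrite andbT.
rewrite sum_sigma (bigD1 i) //= [X in _ + X]big1 ?addr0 => [|j j_i].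
  apply: eq_big => [y|y _]; last by rewrite ffunE.
  by rewrite (inj_eq inr_inj) eq_Tagged eqxx tagged_asE.
rewrite big_pred0 // => y; rewrite (inj_eq inr_inj) (eq_sym i) (negbTE j_i) /= orbF.
by apply/negbTE; apply: contra j_i => /eqP/(congr1 tag) /= ->.
Qed.

Lemma null_pattern_Hadj_restr l : null_pattern adjH l ->
  (forall w, closedN adjF (restrF l) w =
     if w == u then \sum_i restrG l i (v i) else 0) /\
  (forall i x, closedN (adjG i) (restrG l i) x =
     if x == v i then l (inl u) else 0).
Proof.
move=> /eqP/ffunP Nl; split => [w | i x]; apply: F2_add_eq0.
  by rewrite -closedN_Hadj_inl Nl ffunE.
by rewrite -closedN_Hadj_inr Nl ffunE.
Qed.

Hypotheses (symF : symmetric adjF) (irrF : irreflexive adjF)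
  (symG : forall i, symmetric (adjG i)) (irrG : forall i, irreflexive (adjG i))
  (solvF : always_solvable adjF) (solvG : forall i, always_solvable (adjG i)).

Let pF := closedN_inv solvF [ffun=> 1].
Let qF := closedN_inv solvF (delta u).
Let pG i := closedN_inv (solvG i) [ffun=> 1].
Let qG i := closedN_inv (solvG i) (delta (v i)).

Let qF_u : qF u = pF u.
Proof.
exact: preimage_delta_solution_eq (closedN_invK _ _) (solution_closedN_inv _).
Qed.

Let qG_v i : qG i (v i) = pG i (v i).
Proof.
exact: preimage_delta_solution_eq (symG i) (irrG i) _ _ _ (closedN_invK _ _)
  (solution_closedN_inv _).
Qed.

Let parity : 'F_2 := \sum_i qG i (v i).

Let parityE : parity = (odd #|[set i | activation (adjG i) (v i) == 1]|)%:R.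
Proof.
have -> : [set i | activation (adjG i) (v i) == 1] = [set i | qG i (v i) == 1].
  by apply/setP => i; rewrite !inE qG_v activation_solvable; case: ifP.
exact: F2_sum_card.
Qed.

Let null_pattern_Hadj_hub0 l :
  null_pattern adjH l -> l (inl u) = 0 -> l = 0.
Proof.
move=> /null_pattern_Hadj_restr[NlF NlG] lu0.
have lG0 i : restrG l i = 0.
  by apply/solvG/eqP/ffunP => x; rewrite NlG lu0 if_same ffunE.
apply: (restr_eq0 _ _ lG0); apply/solvF/eqP/ffunP => w.
by rewrite NlF big1 ?if_same ?ffunE // => i _; rewrite lG0 ffunE.
Qed.

Let null_pattern_Hadj_hub1 l :
  null_pattern adjH l -> l (inl u) = 1 -> parity = 1 /\ pF u = 1.
Proof.
move=> /null_pattern_Hadj_restr[NlF NlG] lu1.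
have lGq i : restrG l i = qG i.
  apply: (closedN_inj (solvG i)); rewrite closedN_invK.
  by apply/ffunP => x; rewrite NlG lu1 !ffunE; case: eqP.
have NlF_parity w : closedN adjF (restrF l) w = if w == u then parity else 0.
  by rewrite NlF; under eq_bigr => i _ do rewrite lGq.
have lF_u : restrF l u = 1 by rewrite ffunE.
case: (F2_cases parity) => parity1.
  have /ffunP/(_ u) : restrF l = 0.
    by apply/solvF/eqP/ffunP => w; rewrite NlF_parity parity1 if_same ffunE.
  by rewrite lF_u ffunE => /eqP; rewrite oner_eq0.
have lFq : restrF l = qF.
  apply: (closedN_inj solvF); rewrite closedN_invK.
  by apply/ffunP => w; rewrite NlF_parity parity1 !ffunE; case: eqP.
by rewrite -qF_u -lFq.
Qed.

Let hub_pattern : {ffun VH -> 'F_2} :=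
  [ffun z => match z with inl w => qF w | inr t => qG (tag t) (tagged t) end].

Let null_pattern_hub_pattern :
  parity = 1 -> pF u = 1 -> null_pattern adjH hub_pattern.
Proof.
move=> parity1 pFu1; apply/eqP/ffunP => -[w|[i x]]; rewrite [RHS]ffunE.
  rewrite closedN_Hadj_inl.
  have -> : restrF hub_pattern = qF by apply/ffunP => w'; rewrite !ffunE.
  have -> : \sum_i restrG hub_pattern i (v i) = parity.
    by apply: eq_bigr => i _; rewrite !ffunE.
  by rewrite closedN_invK ffunE parity1; case: eqP; rewrite ?F2_addrr ?addr0.
rewrite -[existT _ i x]/(tagG x) closedN_Hadj_inr.
have -> : restrG hub_pattern i = qG i by apply/ffunP => x'; rewrite !ffunE.
by rewrite closedN_invK !ffunE qF_u pFu1; case: eqP; rewrite ?F2_addrr ?addr0.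
Qed.

Lemma always_solvable_HadjP :
  always_solvable adjH <-> ~ (parity = 1 /\ pF u = 1).
Proof.
split=> [solvH [parity1 pFu1] | not_both l Nl].
  have /ffunP/(_ (inl u)) := solvH _ (null_pattern_hub_pattern parity1 pFu1).
  by rewrite !ffunE qF_u pFu1 => /eqP; rewrite oner_eq0.
case: (F2_cases (l (inl u))) => lu; first exact: null_pattern_Hadj_hub0.
by case: not_both; apply: null_pattern_Hadj_hub1 Nl lu.
Qed.

Lemma always_solvable_HadjE : always_solvable adjH <->
  ~ (activation adjF u = 1 /\ odd #|[set i | activation (adjG i) (v i) == 1]|).
Proof.
have pF_act : activation adjF u = 1 <-> pF u = 1.
  by rewrite activation_solvable; case: eqP.
have parity_odd : parity = 1 <-> odd #|[set i | activation (adjG i) (v i) == 1]|.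
  by rewrite parityE; case: odd; split => // /esym/eqP; rewrite oner_eq0.
apply: iff_trans always_solvable_HadjP _.
by split=> not_both [? ?]; apply: not_both; split;
  by [apply/pF_act | apply/parity_odd].
Qed.

End HubGraph.

Arguments always_solvable_HadjE {VF adjF n VG adjG} u v.

Theorem corollary3p4 (VF : finType) (adjF : rel VF) (n : nat)
  (VG : 'I_n -> finType) (adjG : forall i, rel (VG i))
  (u : VF) (v : forall i, VG i) :
  symmetric adjF -> irreflexive adjF ->
  (forall i, symmetric (adjG i)) -> (forall i, irreflexive (adjG i)) ->
  always_solvable adjF -> (forall i, always_solvable (adjG i)) ->
  (activation adjF u = 0 -> always_solvable (Hadj adjF adjG u v)) /\
  (activation adjF u = 1 ->
     (always_solvable (Hadj adjF adjG u v) <->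
      ~~ odd #|[set i : 'I_n | activation (adjG i) (v i) == 1]|)).
Proof.
move=> symF irrF symG irrG solvF solvG.
have solvH := always_solvable_HadjE u v symF irrF symG irrG solvF solvG.
split=> [act0 | act1]; first by apply/solvH; rewrite act0; case.
apply: iff_trans solvH _; rewrite act1.
split=> [not_odd | even [_ odd_S]]; last by rewrite odd_S in even.
by apply/negP => odd_S; exact: not_odd.
Qed.
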